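(* Let $(I,\leq)$ and $(J,\preccurlyeq)$ be finite posets and $\mathcal P\colon J^{\mathrm{op}}\to\mathrm{Fun}(I,\mathrm{vect}_K)$ a thin functor. Then the collection $\{\mathcal P(a)\mid a\in J,\ \mathcal P(a)\neq0\}$ is independent.
   Context: $K$ is a field, $\mathrm{vect}_K$ finite-dimensional $K$-vector spaces, $\mathrm{Fun}(I,\mathrm{vect}_K)$ the category of functors $I\to\mathrm{vect}_K$ with natural transformations (hom sets $\mathrm{Nat}_I$). For $a\in J$, $K(a,-)\colon J\to\mathrm{vect}_K$ is the free functor ($K(a,b)=K$ if $a\preccurlyeq b$, else $0$, identity transitions between nonzero values). $\mathcal R M=\mathrm{Nat}_I(\mathcal P(-),M)$ defines $\mathcal R\colon\mathrm{Fun}(I,\mathrm{vect}_K)\to\mathrm{Fun}(J,\mathrm{vect}_K)$, with left adjoint $\mathcal L$ (given by $\mathcal LF=\mathrm{colim}\big(\bigoplus_{a_0\prec a_1}\mathcal P(a_1)\otimes F(a_0)\rightrightarrows\bigoplus_a\mathcal P(a)\otimes F(a)\big)$), so $\mathcal LK(a,-)\cong\mathcal P(a)$; $\eta_a\colon K(a,-)\to\mathcal R\mathcal LK(a,-)$ is the unit. $\mathcal P$ is thin if each $\eta_a$ is pointwise surjective. For a collection $\mathcal C$ of objects of an abelian category, an object is $\mathcal C$-free if it is isomorphic to a finite direct sum of elements of $\mathcal C$; $\mathcal C$ is independent if for every $\mathcal C$-free object $F$ there is a unique finitely supported function $\beta\colon\mathcal C\to\mathbb N$ with $F\cong\bigoplus_{A\in\mathcal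 C}A^{\beta(A)}$. *)

(* Concrete model of Fun(I, vect_K) for a finite poset I:
   a functor M : I -> vect_K is given by dimensions  rdim M i  (M(i) = K^(rdim M i))
   and matrices  rmap M i j  for i <= j, acting on ROW vectors (v |-> v *m A). *)
From HB Require Import structures.
From mathcomp Require Import all_boot all_order all_algebra.
Set Implicit Arguments. Unset Strict Implicit. Unset Printing Implicit Defensive.
Import Order.TTheory GRing.Theory.
Local Open Scope ring_scope.

Section Reps.
Variables (K : fieldType) (dI : Order.disp_t) (I : finPOrderType dI).

(* data of a functor I -> vect_K; the entries rmap i j for i not <= j are irrelevant *)
Record rep := Rep {
  rdim : I -> nat;
  rmap : forall i j : I, 'M[K]_(rdim i, rdim j)
}.

Definition is_rep (M : rep) : Prop :=
  (forall i, rmap M i i = 1%:M) /\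
  (forall i j k, (i <= j)%O -> (j <= k)%O -> rmap M i k = rmap M i j *m rmap M j k).

Definition is_nat (M N : rep) (f : forall i, 'M[K]_(rdim M i, rdim N i)) : Prop :=
  forall i j, (i <= j)%O -> rmap M i j *m f j = f i *m rmap N i j.

Definition rep_iso (M N : rep) : Prop :=
  exists (f : forall i, 'M[K]_(rdim M i, rdim N i))
         (g : forall i, 'M[K]_(rdim N i, rdim M i)),
    [/\ is_nat f, is_nat g, forall i, f i *m g i = 1%:M & forall i, g i *m f i = 1%:M].

Definition rep0 : rep := @Rep (fun _ => 0%N) (fun _ _ => 0).

Definition rep_sum (M N : rep) : rep :=
  @Rep (fun i => (rdim M i + rdim N i)%N)
       (fun i j => block_mx (rmap M i j) 0 0 (rmap N i j)).

Definition rep_nonzero (M : rep) : bool := [exists i, (0 < rdim M i)%N].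

Definition rep_pow (A : rep) (n : nat) : rep := iter n (rep_sum A) rep0.

Definition rep_free_sum (C : finType) (A : C -> rep) (beta : {ffun C -> nat}) : rep :=
  foldr (fun c acc => rep_sum (rep_pow (A c) (beta c)) acc) rep0 (enum C).

Definition is_free (C : finType) (A : C -> rep) (F : rep) : Prop :=
  exists beta : {ffun C -> nat}, rep_iso F (rep_free_sum A beta).

Definition independent (C : finType) (A : C -> rep) : Prop :=
  forall F : rep, is_rep F -> is_free A F ->
    exists! beta : {ffun C -> nat}, rep_iso F (rep_free_sum A beta).

End Reps.

Section JFunctors.
Variables (K : fieldType) (dI : Order.disp_t) (I : finPOrderType dI)
          (dJ : Order.disp_t) (J : finPOrderType dJ).

(* data of a functor P : J^op -> Fun(I, vect_K):
   for a <= b, Pmor a b : P(b) => P(a) (component at i is Pmor a b i) *)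
Record jfunctor := JFunctor {
  Pobj : J -> rep K I;
  Pmor : forall (a b : J) (i : I), 'M[K]_(rdim (Pobj b) i, rdim (Pobj a) i)
}.

Definition is_jfunctor (P : jfunctor) : Prop :=
  [/\ forall a, is_rep (Pobj P a),
      forall a b, (a <= b)%O -> is_nat (Pmor P a b),
      forall a i, Pmor P a a i = 1%:M &
      forall a b c, (a <= b)%O -> (b <= c)%O ->
        forall i, Pmor P a c i = Pmor P b c i *m Pmor P a b i].

(* Thinness, unfolded: under LK(a,-) = P(a), the unit
   eta_a(b) : K(a,b) -> (R P(a))(b) = Nat_I(P(b), P(a))
   sends lambda to lambda * P(a <= b) (domain 0 if not a <= b).
   Pointwise surjectivity of every eta_a says: *)
Definition thin (P : jfunctor) : Prop :=
  forall (a b : J) (f : forall i, 'M[K]_(rdim (Pobj P b) i, rdim (Pobj P a) i)),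
    is_nat f ->
    if (a <= b)%O then exists k : K, forall i, f i = k *: Pmor P a b i
    else forall i, f i = 0.

End JFunctors.

(* Fix M in Fun(I, vect_K). The dimension of Nat_I(M, X) is invariant under
   isomorphism of X and additive over direct sums. Thinness makes
   dim Nat_I(P(b), P(c)) equal to 1 if c <= b and P(c <= b) <> 0, and to 0
   otherwise; in particular it is 1 for c = b when P(b) <> 0. So if
   F ~ (+)_c P(c)^beta(c), the numbers dim Nat_I(P(b), F) are the values of a
   unitriangular (with respect to the order of J) system in beta, which
   therefore determines beta. *)

From HB Require Import structures.
From mathcomp Require Import all_boot all_order all_algebra.
Set Implicit Arguments. Unset Strict Implicit. Unset Printing Implicit Defensive.
Import Order.TTheory GRing.Theory.
Local Open Scope ring_scope.

Section LinearCombinations.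
Variables (K : fieldType) (T : Type) (V : T -> lmodType K).

Definition lincomb n (e : 'I_n -> forall t, V t) (v : 'rV[K]_n) : forall t, V t :=
  fun t => \sum_(k < n) v 0 k *: e k t.

Definition lincomb_free n (e : 'I_n -> forall t, V t) : Prop :=
  forall v, (forall t, lincomb e v t = 0) -> v = 0.

Lemma lincomb_free_leq n m (e : 'I_n -> forall t, V t) (d : 'I_m -> forall t, V t)
    (w : 'I_n -> 'rV[K]_m) :
  lincomb_free e -> (forall k t, e k t = lincomb d (w k) t) -> (n <= m)%N.
Proof.
move=> free_e e_span; rewrite leqNgt; apply/negP => ltmn.
pose C := \matrix_(k < n, l < m) w k 0 l.
have /existsP[r nz_r] : [exists r, row r (kermx C) != 0].
  have : kermx C != 0.
    by rewrite kermx_eq0 -row_leq_rank -ltnNge (leq_ltn_trans (rank_leq_col C)).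
  apply: contraNT => /existsPn no_r; apply/eqP/row_matrixP => r.
  by rewrite row0; apply/eqP/negPn/no_r.
suff : row r (kermx C) = 0 by move/eqP; rewrite (negbTE nz_r).
set v := row r (kermx C); have vC : v *m C = 0 by rewrite -row_mul mulmx_ker row0.
apply: free_e => t; rewrite /lincomb.
under eq_bigr do rewrite e_span /lincomb scaler_sumr.
rewrite exchange_big /=; apply: big1 => l _.
under eq_bigr do rewrite scalerA.
rewrite -scaler_suml.
have -> : \sum_k v 0 k * w k 0 l = (v *m C) 0 l.
  by rewrite mxE; apply: eq_bigr => k _; rewrite /C !mxE.
by rewrite vC mxE scale0r.
Qed.

Lemma lincomb_split_ord n m (e : 'I_(n + m) -> forall t, V t) v t :
  lincomb e v t = lincomb (fun k => e (lshift m k)) (lsubmx v) t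
                  + lincomb (fun k => e (rshift n k)) (rsubmx v) t.
Proof.
by rewrite /lincomb big_split_ord; congr (_ + _); apply: eq_bigr => k _; rewrite mxE.
Qed.

End LinearCombinations.

Lemma sum_row_mx (V : nmodType) m n1 n2 p (A : 'I_p -> 'M[V]_(m, n1))
    (B : 'I_p -> 'M[V]_(m, n2)) :
  \sum_(k < p) row_mx (A k) (B k) = row_mx (\sum_(k < p) A k) (\sum_(k < p) B k).
Proof. by elim/big_rec3: _ => [|k x y z _ ->]; rewrite ?row_mx0 ?add_row_mx. Qed.

Section NatBasis.
Variables (K : fieldType) (dI : Order.disp_t) (I : finPOrderType dI) (M : rep K I).

Definition nat_space (X : rep K I) (i : I) : lmodType K := 'M[K]_(rdim M i, rdim X i).

Definition nat_basis (X : rep K I) (n : nat) : Prop :=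
  exists e : 'I_n -> forall i, nat_space X i,
    [/\ forall k, is_nat (e k), lincomb_free e &
        forall g, is_nat g -> exists v, forall i, g i = lincomb e v i].

Lemma nat_basis_unique X n m : nat_basis X n -> nat_basis X m -> n = m.
Proof.
have le_nm n' m' : nat_basis X n' -> nat_basis X m' -> (n' <= m')%N.
  move=> [e [nat_e free_e _]] [d [_ _ span_d]].
  have /fin_all_exists[w e_span] : forall k, exists w, forall i, e k i = lincomb d w i.
    by move=> k; apply: span_d.
  exact: lincomb_free_leq free_e e_span.
by move=> bn bm; apply/eqP; rewrite eqn_leq !le_nm.
Qed.

Lemma is_nat0 X : is_nat (N := X) (fun i => 0 : 'M[K]_(rdim M i, rdim X i)).
Proof. by move=> i j _; rewrite mulmx0 mul0mx. Qed.

Lemma nat_basis0 X :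
  (forall g : forall i, nat_space X i, is_nat g -> forall i, g i = 0) -> nat_basis X 0.
Proof.
move=> nat_eq0; exists (fun _ _ => 0); split; first by case.
  by move=> v _; apply: thinmx0.
by move=> g /nat_eq0 g0; exists 0 => i; rewrite g0 /lincomb big_ord0.
Qed.

Lemma nat_basis1 X (h : forall i, nat_space X i) :
  is_nat h -> (exists i, h i != 0) ->
  (forall g : forall i, nat_space X i, is_nat g -> exists a, forall i, g i = a *: h i) ->
  nat_basis X 1.
Proof.
move=> nat_h [i0 nz_h] h_span; exists (fun _ => h); split => // [v vh0|g /h_span[a g_ah]].
  apply/rowP => k; rewrite ord1 mxE; apply/eqP.
  by have /eqP := vh0 i0; rewrite /lincomb big_ord1 scaler_eq0 (negbTE nz_h) orbF.
by exists (const_mx a) => i; rewrite /lincomb big_ord1 mxE g_ah.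
Qed.

Lemma lincomb_mulmxr X Y n (e : 'I_n -> forall i, nat_space X i)
    (f : forall i, 'M[K]_(rdim X i, rdim Y i)) v i :
  lincomb (fun k i => e k i *m f i : nat_space Y i) v i = lincomb e v i *m f i.
Proof. by rewrite /lincomb mulmx_suml; apply: eq_bigr => k _; rewrite scalemxAl. Qed.

Lemma nat_basis_iso X Y n : rep_iso X Y -> nat_basis Y n -> nat_basis X n.
Proof.
move=> [f [g [nat_f nat_g fg gf]]] [e [nat_e free_e span_e]].
exists (fun k i => e k i *m g i); split.
- by move=> k i j lij; rewrite mulmxA nat_e // -!mulmxA nat_g.
- move=> v /(_ _) eg0; apply: free_e => i.
  by rewrite -[LHS]mulmx1 -gf mulmxA -lincomb_mulmxr eg0 mul0mx.
- move=> h nat_h.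
  have [|v hf] := span_e (fun i => h i *m f i).
    by move=> i j lij; rewrite mulmxA nat_h // -!mulmxA nat_f.
  by exists v => i; rewrite lincomb_mulmxr -hf -mulmxA fg mulmx1.
Qed.

Lemma is_nat_row_mx A B (f : forall i, 'M[K]_(rdim M i, rdim A i))
    (g : forall i, 'M[K]_(rdim M i, rdim B i)) :
  is_nat (N := rep_sum A B) (fun i => row_mx (f i) (g i)) <-> is_nat f /\ is_nat g.
Proof.
have rowE i j :
    rmap M i j *m row_mx (f j) (g j) = row_mx (f i) (g i) *m rmap (rep_sum A B) i j
    <-> rmap M i j *m f j = f i *m rmap A i j /\ rmap M i j *m g j = g i *m rmap B i j.
  rewrite /= mul_mx_row mul_row_block !mulmx0 addr0 add0r.
  by split => [/eq_row_mx | [-> ->]].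
split => [nat_fg | [nat_f nat_g]]; first by split => i j /nat_fg /rowE [].
by move=> i j lij; apply/rowE; rewrite nat_f ?nat_g.
Qed.

Lemma nat_basis_rep_sum A B n m :
  nat_basis A n -> nat_basis B m -> nat_basis (rep_sum A B) (n + m).
Proof.
move=> [eA [nat_eA free_eA span_eA]] [eB [nat_eB free_eB span_eB]].
pose e k i : nat_space (rep_sum A B) i :=
  match split k with inl k1 => row_mx (eA k1 i) 0 | inr k2 => row_mx 0 (eB k2 i) end.
have eE v i : lincomb e v i = row_mx (lincomb eA (lsubmx v) i) (lincomb eB (rsubmx v) i).
  rewrite lincomb_split_ord /lincomb /e.
  under eq_bigr do rewrite (unsplitK (inl _)) scale_row_mx scaler0.
  under [X in _ + X]eq_bigr do rewrite (unsplitK (inr _)) scale_row_mx scaler0.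
  by rewrite !sum_row_mx !big1_eq add_row_mx addr0 add0r.
exists e; split.
- move=> k; rewrite /e; case: (split k) => k'; apply/is_nat_row_mx.
  + by split; [exact: nat_eA | exact: is_nat0].
  + by split; [exact: is_nat0 | exact: nat_eB].
- move=> v e0.
  have lr0 i : lincomb eA (lsubmx v) i = 0 /\ lincomb eB (rsubmx v) i = 0.
    by apply: eq_row_mx; rewrite row_mx0 -eE e0.
  rewrite -[v]hsubmxK (free_eA _ (fun i => (lr0 i).1)).
  by rewrite (free_eB _ (fun i => (lr0 i).2)) row_mx0.
- move=> g nat_g.
  have /is_nat_row_mx[nat_l nat_r] :
      is_nat (N := rep_sum A B) (fun i => row_mx (lsubmx (g i)) (rsubmx (g i))).
    by move=> i j lij; rewrite !hsubmxK; apply: nat_g.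
  have [vA gA] := span_eA _ nat_l; have [vB gB] := span_eB _ nat_r.
  by exists (row_mx vA vB) => i; rewrite eE row_mxKl row_mxKr -gA -gB hsubmxK.
Qed.

Lemma nat_basis_rep_pow A t n : nat_basis A t -> nat_basis (rep_pow A n) (n * t).
Proof.
move=> bA; elim: n => [|n IH]; first by apply: nat_basis0 => g _ i; apply: thinmx0.
by rewrite mulSn; apply: nat_basis_rep_sum.
Qed.

Lemma nat_basis_free_sum (C : finType) (A : C -> rep K I) (t : C -> nat) beta :
  (forall c, nat_basis (A c) (t c)) ->
  nat_basis (rep_free_sum A beta) (\sum_(c <- enum C) beta c * t c).
Proof.
move=> bA; rewrite /rep_free_sum; elim: (enum C) => [|c s IH].
  by rewrite big_nil; apply: nat_basis0 => g _ i; apply: thinmx0.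
by rewrite big_cons; apply: nat_basis_rep_sum => //; apply: nat_basis_rep_pow.
Qed.

End NatBasis.

Section Unitriangular.
Variables (d : Order.disp_t) (J : finPOrderType d) (C : finType)
          (s : C -> J) (t : C -> C -> nat).
Hypotheses (s_inj : injective s) (t_diag : forall c, t c c = 1%N)
  (t_lower : forall b c, t b c != 0%N -> (s c <= s b)%O).

Lemma unitriangular_sum_inj (beta gamma : {ffun C -> nat}) :
  (forall b, \sum_(c <- enum C) beta c * t b c = \sum_(c <- enum C) gamma c * t b c)%N ->
  beta = gamma.
Proof.
move=> eq_sum; apply/ffunP => c.
pose below c := [set c' | (s c' < s c)%O].
suff: forall n c, (#|below c| < n)%N -> beta c = gamma c by apply; apply: ltnSn.
elim=> // n IH {}c lt_c.
have := eq_sum c; rewrite !big_enum /= (bigD1 c) //= [in RHS](bigD1 c) //= t_diag !muln1.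
rewrite (eq_bigr (fun c' => gamma c' * t c c')%N); first by move/addIn.
move=> c' ne_c'c; have [->|nz_t] := eqVneq (t c c') 0%N; first by rewrite !muln0.
have lt_c'c : (s c' < s c)%O by rewrite lt_neqAle t_lower // andbT (inj_eq s_inj).
rewrite IH // -ltnS (leq_trans _ lt_c) // ltnS; apply: proper_card; apply/properP; split.
  by apply/subsetP => x; rewrite !inE => /lt_trans; apply.
by exists c'; rewrite !inE ?lt_c'c // ltxx.
Qed.

End Unitriangular.

Section ThinFunctor.
Variables (K : fieldType) (dI : Order.disp_t) (I : finPOrderType dI)
          (dJ : Order.disp_t) (J : finPOrderType dJ) (P : jfunctor K I J).
Hypotheses (P_functor : is_jfunctor P) (P_thin : thin P).

Definition hom_dim (b c : J) : nat := (c <= b)%O && [exists i, Pmor P c b i != 0].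

Lemma nat_basis_Pobj b c : nat_basis (Pobj P b) (Pobj P c) (hom_dim b c).
Proof.
case: P_functor => _ nat_Pmor _ _; rewrite /hom_dim.
have [/andP[le_cb /existsP[i nz_Pcb]] | not_hom] := boolP (_ && _).
  apply: nat_basis1 (nat_Pmor _ _ le_cb) _ _; first by exists i.
  by move=> g /P_thin; rewrite le_cb.
apply: nat_basis0 => g /P_thin; case: ifP => [le_cb [a g_a] i | _ //].
rewrite g_a; suff -> : Pmor P c b i = 0 by rewrite scaler0.
by apply/eqP; apply: contraNT not_hom => nz_Pcb; rewrite le_cb; apply/existsP; exists i.
Qed.

Lemma hom_dim_diag a : rep_nonzero (Pobj P a) -> hom_dim a a = 1%N.
Proof.
case/existsP => i lt0i; rewrite /hom_dim lexx.
suff -> : [exists i, Pmor P a a i != 0] by [].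
apply/existsP; exists i.
case: P_functor => _ _ -> _; apply/eqP => /matrixP /(_ (Ordinal lt0i) (Ordinal lt0i)).
by rewrite !mxE eqxx => /eqP; rewrite oner_eq0.
Qed.

Lemma hom_dim_neq0 b c : hom_dim b c != 0%N -> (c <= b)%O.
Proof. by rewrite /hom_dim; case: (c <= b)%O. Qed.

Lemma nat_basis_Pobj_free_sum (C : finType) (s : C -> J) beta (F : rep K I) b :
  rep_iso F (rep_free_sum (fun c => Pobj P (s c)) beta) ->
  nat_basis (Pobj P b) F (\sum_(c <- enum C) beta c * hom_dim b (s c)).
Proof.
move=> F_beta; apply: nat_basis_iso F_beta _.
by apply: nat_basis_free_sum => c; apply: nat_basis_Pobj.
Qed.

End ThinFunctor.

Theorem proposition5p10 (K : fieldType) (dI : Order.disp_t) (I : finPOrderType dI)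
  (dJ : Order.disp_t) (J : finPOrderType dJ) (P : jfunctor K I J) :
  is_jfunctor P -> thin P ->
  independent (fun c : {a : J | rep_nonzero (Pobj P a)} => Pobj P (sval c)).
Proof.
move=> P_functor P_thin F _ [beta F_beta]; exists beta; split => // gamma F_gamma.
apply: (unitriangular_sum_inj (s := sval) (t := fun b c => hom_dim P (sval b) (sval c)))
  => [||b c|b].
- exact: val_inj.
- by case=> a; apply: hom_dim_diag.
- exact: hom_dim_neq0.
- exact: nat_basis_unique (nat_basis_Pobj_free_sum P_functor P_thin _ F_beta)
                          (nat_basis_Pobj_free_sum P_functor P_thin _ F_gamma).
Qed.
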